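(* Let $M_0=(S,\mathscr{C})$ be a matroid of finite rank which is non-Hamiltonian (in particular, $M_0$ may be the cycle matroid of a graph without Hamiltonian circuits). Then there exists a matroid $M$ and a nontrivial circuit injection $f:M_0\rightarrow M$.
   Context: A matroid is a pair $(S,\mathscr{C})$ with $S\neq\emptyset$ and $\mathscr{C}\subseteq 2^S$ (the circuits) satisfying: (I) $A,B\in\mathscr{C}$, $A\subseteq B$ implies $A=B$; (II) $A,B\in\mathscr{C}$, $a\in A\cap B$, $b\in (A\cup B)\setminus(A\cap B)$ implies there is $D\in\mathscr{C}$ with $D\subseteq A\cup B$, $a\notin D$, $b\in D$. The rank $r(M)$ is the usual matroid rank. $M$ is Hamiltonian if it has a circuit $A$ with $|A|=r(M)+1$. For matroids $M=(S,\mathscr{C})$, $M'=(S',\mathscr{C}')$, a circuit injection $f:M\rightarrow M'$ is a bijection $f:S\to S'$ with $f(A)\in\mathscr{C}'$ for every $A\in\mathscr{C}$; it is nontrivial if some $B\in\mathscr{C}'$ satisfies $B\neq f(A)$ for all $A\in\mathscr{C}$. *)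

(* Matroids given by circuit axioms on a (possibly infinite)
   ground set; the ground set S is the whole carrier type T. *)
From Stdlib Require Import List Arith.

Definition subset {T : Type} (A B : T -> Prop) : Prop := forall x, A x -> B x.

Definition has_card {T : Type} (A : T -> Prop) (n : nat) : Prop :=
  exists l : list T, NoDup l /\ length l = n /\ (forall x, A x <-> In x l).

Record matroid (T : Type) : Type := Matroid {
  circuit : (T -> Prop) -> Prop;
  ground_nonempty : inhabited T;
  circuit_antichain : forall A B, circuit A -> circuit B -> subset A B ->
      forall x, A x <-> B x;
  circuit_elim : forall A B a b, circuit A -> circuit B ->
      A a -> B a ->
      ((A b \/ B b) /\ ~ (A b /\ B b)) ->
      exists D, circuit D /\ subset D (fun x => A x \/ B x) /\ ~ D a /\ D b
}.
Arguments circuit {T} m _.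

Definition independent {T : Type} (M : matroid T) (I : T -> Prop) : Prop :=
  forall A, circuit M A -> ~ subset A I.

Definition is_rank {T : Type} (M : matroid T) (r : nat) : Prop :=
  (exists I, independent M I /\ has_card I r) /\
  (forall I n, independent M I -> has_card I n -> n <= r).

Definition finite_rank {T : Type} (M : matroid T) : Prop := exists r, is_rank M r.

Definition hamiltonian {T : Type} (M : matroid T) : Prop :=
  exists r, is_rank M r /\ exists A, circuit M A /\ has_card A (S r).

Definition image {T T' : Type} (f : T -> T') (A : T -> Prop) : T' -> Prop :=
  fun y => exists x, A x /\ f x = y.

Definition bijective {T T' : Type} (f : T -> T') : Prop :=
  (forall x y, f x = f y -> x = y) /\ (forall y, exists x, f x = y).

Definition circuit_injection {T T' : Type} (M : matroid T) (M' : matroid T')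
    (f : T -> T') : Prop :=
  bijective f /\ forall A, circuit M A -> circuit M' (image f A).

Definition nontrivial_ci {T T' : Type} (M : matroid T) (M' : matroid T')
    (f : T -> T') : Prop :=
  circuit_injection M M' f /\
  exists B, circuit M' B /\
    forall A, circuit M A -> ~ (forall y, B y <-> image f A y).

From Stdlib Require Import List Arith Lia Classical ClassicalEpsilon
  FunctionalExtensionality PropExtensionality.

(* The target is the truncation of M0: its circuits are the circuits of M0
   together with the bases of M0, and the identity is the circuit injection;
   a basis is never a circuit of M0, which makes it nontrivial.  A basis inside
   a circuit would force a circuit of size r + 1, so non-Hamiltonicity is
   exactly what makes the new family an antichain.  Elimination between a
   circuit C and a basis B through a reduces to basis exchange: some c in C \ B
   has its fundamental circuit in B + c through a, and then B - a + c is a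
   basis inside C + B. *)

Definition add_elt {T : Type} (B : T -> Prop) (x : T) : T -> Prop :=
  fun y => B y \/ y = x.

Definition swap_elt {T : Type} (B : T -> Prop) (a c : T) : T -> Prop :=
  fun y => (B y /\ y <> a) \/ y = c.

Definition basis {T : Type} (M : matroid T) (r : nat) (B : T -> Prop) : Prop :=
  independent M B /\ has_card B r.

Definition trunc_circuit {T : Type} (M : matroid T) (r : nat) (X : T -> Prop) : Prop :=
  circuit M X \/ basis M r X.

Section Cardinality.

Variable T : Type.

Lemma has_card_ext (A B : T -> Prop) n :
  has_card A n -> (forall x, A x <-> B x) -> has_card B n.
Proof.
  intros [l [Hnd [Hl Hin]]] HAB. exists l; repeat split; auto.
  - intros Bx. apply Hin, HAB, Bx.
  - intros Hx. apply HAB, Hin, Hx.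
Qed.

Lemma has_card_add (B : T -> Prop) n x :
  has_card B n -> ~ B x -> has_card (add_elt B x) (S n).
Proof.
  intros [l [Hnd [Hl Hin]]] Bx. exists (x :: l). split; [|split].
  - constructor; auto. intros H. apply Bx, Hin, H.
  - simpl; auto.
  - intros y. unfold add_elt. simpl. rewrite Hin. split; intros [H | H]; auto.
Qed.

Lemma has_card_swap (B : T -> Prop) n a c :
  has_card B n -> B a -> ~ B c -> has_card (swap_elt B a c) n.
Proof.
  intros [l [Hnd [Hl Hin]]] Ba Bc.
  assert (Hal : In a l) by (apply Hin; auto).
  destruct (in_split _ _ Hal) as [l1 [l2 ->]].
  assert (Hnda : ~ In a (l1 ++ l2)) by exact (NoDup_remove_2 _ _ _ Hnd).
  assert (Hcl : ~ In c (l1 ++ l2)).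
  { intros H. apply Bc, Hin, in_or_app. apply in_app_or in H. simpl; tauto. }
  exists (c :: l1 ++ l2). split; [|split].
  - constructor; [exact Hcl | exact (NoDup_remove_1 _ _ _ Hnd)].
  - rewrite length_app in Hl. simpl in *. rewrite length_app. lia.
  - intros y. unfold swap_elt. rewrite Hin. simpl.
    rewrite !in_app_iff. simpl. split.
    + intros [[[H | [H | H]] Hya] | ->]; auto. congruence.
    + intros [-> | H]; auto. left. split; [tauto|]. intros ->. apply Hnda, in_app_iff, H.
Qed.

End Cardinality.

Section Matroid.

Variable T : Type.
Variable M : matroid T.

Lemma independent_subset I J : independent M I -> subset J I -> independent M J.
Proof. intros HI HJI A HA HAJ. apply (HI A HA). intros x Ax. apply HJI, HAJ, Ax. Qed.

Lemma dependent_has_circuit X : ~ independent M X -> exists C, circuit M C /\ subset C X.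
Proof.
  intros HX. apply not_all_ex_not in HX as [C HC].
  apply imply_to_and in HC as [HC HCX]. exists C. split; [exact HC | exact (NNPP _ HCX)].
Qed.

Lemma circuit_not_subset_independent C B :
  circuit M C -> independent M B -> exists c, C c /\ ~ B c.
Proof.
  intros HC HB. apply NNPP. intros Hno. apply (HB C HC). intros y Cy.
  apply NNPP. intros By. apply Hno. exists y; auto.
Qed.

Lemma circuit_remove_independent C a :
  circuit M C -> C a -> independent M (fun y => C y /\ y <> a).
Proof.
  intros HC Ca A HA HAC.
  assert (HAa : A a).
  { apply (circuit_antichain _ M A C HA HC); [intros y Ay; apply HAC, Ay | exact Ca]. }
  exact (proj2 (HAC a HAa) eq_refl).
Qed.

Lemma independent_add_circuit B x :
  independent M B -> ~ independent M (add_elt B x) ->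
  exists K, circuit M K /\ subset K (add_elt B x) /\ K x.
Proof.
  intros HB HBx. destruct (dependent_has_circuit _ HBx) as [K [HK HKs]].
  exists K. repeat split; auto.
  apply NNPP. intros Kx. apply (HB K HK). intros y Ky.
  destruct (HKs y Ky) as [By | ->]; [exact By | contradiction].
Qed.

(* Any circuit inside B - a + c must pass through c; eliminating c against K
   leaves a circuit through a inside B. *)
Lemma fundamental_circuit_exchange B K a c :
  independent M B -> circuit M K -> subset K (add_elt B c) -> K a -> K c -> a <> c ->
  independent M (swap_elt B a c).
Proof.
  intros HB HK HKs Ka Kc Hac C' HC' HC's.
  destruct (classic (C' c)) as [C'c | C'c].
  - assert (C'a : ~ C' a).
    { intros C'a. destruct (HC's a C'a) as [[_ H] | H]; auto. }
    destruct (circuit_elim _ M C' K c a HC' HK C'c Kc) as [D [HD [HDs [Dc Da]]]];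
      [tauto|].
    apply (HB D HD). intros y Dy.
    assert (Hyc : y <> c) by (intros ->; contradiction).
    destruct (HDs y Dy) as [C'y | Ky].
    + destruct (HC's y C'y) as [[By _] | ->]; [exact By | contradiction].
    + destruct (HKs y Ky) as [By | ->]; [exact By | contradiction].
  - apply (HB C' HC'). intros y C'y.
    destruct (HC's y C'y) as [[By _] | ->]; [exact By | contradiction].
Qed.

Section Rank.

Variable r : nat.
Hypothesis Hr : is_rank M r.

Lemma independent_card_le I n : independent M I -> has_card I n -> n <= r.
Proof. apply (proj2 Hr). Qed.

Lemma independent_finite I : independent M I -> exists l, forall x, I x -> In x l.
Proof.
  intros HI.
  assert (Hgrow : forall n l, NoDup l -> (forall x, In x l -> I x) -> r - length l <= n ->
            exists l', forall x, I x -> In x l').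
  { induction n as [|n IHn]; intros l Hnd HlI Hlen;
      (destruct (classic (forall x, I x -> In x l)) as [Hcov | Hcov]; [eauto|]);
      apply not_all_ex_not in Hcov as [x Hx]; apply imply_to_and in Hx as [Ix Hxl].
    - exfalso.
      assert (Hle : length (x :: l) <= r).
      { apply (independent_card_le (fun y => In y (x :: l))).
        - apply (independent_subset I); [exact HI|]. intros y [-> | Hy]; auto.
        - exists (x :: l). repeat split; auto. constructor; auto. }
      simpl in Hle. lia.
    - apply (IHn (x :: l)).
      + constructor; auto.
      + intros y [-> | Hy]; auto.
      + simpl. lia. }
  apply (Hgrow r nil); [constructor | intros x [] | lia].
Qed.

Lemma basis_fundamental_circuit B c :
  basis M r B -> ~ B c -> exists K, circuit M K /\ subset K (add_elt B c) /\ K c.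
Proof.
  intros [HB HBc] Bc. apply independent_add_circuit; [exact HB|].
  intros Hi. pose proof (independent_card_le _ _ Hi (has_card_add _ _ _ _ HBc Bc)). lia.
Qed.

(* Induction on the elements of C outside B: if the fundamental circuit of
   c in C \ B misses a, eliminating c between C and it yields a circuit through
   a with fewer elements outside B. *)
Lemma fundamental_circuit_through B a :
  basis M r B -> B a -> forall n C l,
  circuit M C -> C a -> (forall x, C x -> ~ B x -> In x l) -> length l <= n ->
  exists c K, C c /\ ~ B c /\ circuit M K /\ subset K (add_elt B c) /\ K a /\ K c.
Proof.
  intros HB Ba n. induction n as [|n IHn]; intros C l HC Ca HCl Hlen;
    destruct (circuit_not_subset_independent C B HC (proj1 HB)) as [c [Cc Bc]];
    pose proof (HCl c Cc Bc) as Hcl.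
  - destruct l; simpl in *; [contradiction | lia].
  - destruct (basis_fundamental_circuit B c HB Bc) as [K [HK [HKs Kc]]].
    destruct (classic (K a)) as [Ka | Ka]; [exists c, K; tauto|].
    destruct (circuit_elim _ M C K c a HC HK Cc Kc) as [D [HD [HDs [Dc Da]]]];
      [tauto|].
    assert (HDC : forall x, D x -> ~ B x -> C x /\ x <> c).
    { intros x Dx Bx. split; [|intros ->; contradiction].
      destruct (HDs x Dx) as [Cx | Kx]; [exact Cx|].
      destruct (HKs x Kx) as [? | ->]; [contradiction | contradiction]. }
    pose (eq_dec := fun x y : T => excluded_middle_informative (x = y)).
    destruct (IHn D (remove eq_dec c l) HD Da)
      as [c' [K' [Dc' [Bc' HK']]]].
    + intros x Dx Bx. destruct (HDC x Dx Bx) as [Cx Hxc].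
      apply in_in_remove; auto.
    + pose proof (remove_length_lt eq_dec l c Hcl). lia.
    + exists c', K'. split; [exact (proj1 (HDC c' Dc' Bc')) | auto].
Qed.

Lemma circuit_basis_exchange B C a :
  basis M r B -> circuit M C -> C a -> B a ->
  exists c, C c /\ ~ B c /\ basis M r (swap_elt B a c).
Proof.
  intros HB HC Ca Ba.
  destruct (independent_finite _ (circuit_remove_independent C a HC Ca)) as [l Hl].
  destruct (fundamental_circuit_through B a HB Ba (length l) C l HC Ca)
    as [c [K [Cc [Bc [HK [HKs [Ka Kc]]]]]]]; auto.
  { intros x Cx Bx. apply Hl. split; [exact Cx|]. intros ->. contradiction. }
  exists c. repeat split; auto.
  - apply (fundamental_circuit_exchange B K a c); auto; [apply HB|].
    intros ->. contradiction.
  - apply has_card_swap; auto. apply HB.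
Qed.

Lemma basis_exchange_trunc B a b :
  basis M r B -> B a -> ~ B b ->
  exists D, trunc_circuit M r D /\ subset D (swap_elt B a b) /\ D b.
Proof.
  intros [HB HBc] Ba Bb.
  destruct (classic (independent M (swap_elt B a b))) as [Hi | Hi].
  - exists (swap_elt B a b). repeat split.
    + right. split; [exact Hi | exact (has_card_swap _ _ _ _ _ HBc Ba Bb)].
    + intros y Hy; exact Hy.
    + right. reflexivity.
  - destruct (dependent_has_circuit _ Hi) as [C [HC HCs]].
    exists C. repeat split; [left; exact HC | exact HCs|].
    apply NNPP. intros Cb. apply (HB C HC). intros y Cy.
    destruct (HCs y Cy) as [[By _] | ->]; [exact By | contradiction].
Qed.

Lemma trunc_elim_with_basis A B a b :
  trunc_circuit M r A -> basis M r B -> A a -> B a ->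
  (A b \/ B b) /\ ~ (A b /\ B b) ->
  exists D, trunc_circuit M r D /\ subset D (fun x => A x \/ B x) /\ ~ D a /\ D b.
Proof.
  intros HA HB Aa Ba [[Ab | Bb] Hnand].
  - destruct (basis_exchange_trunc B a b HB Ba (fun Bb => Hnand (conj Ab Bb)))
      as [D [HD [HDs Db]]].
    exists D. split; [exact HD|]. split; [|split; [|exact Db]].
    + intros y Dy. destruct (HDs y Dy) as [[By _] | ->]; auto.
    + intros Da. destruct (HDs a Da) as [[_ H] | <-]; auto.
  - destruct HA as [HA | HA].
    + destruct (circuit_basis_exchange B A a HB HA Aa Ba) as [c [Ac [Bc HX]]].
      exists (swap_elt B a c). repeat split.
      * right. exact HX.
      * intros y [[By _] | ->]; auto.
      * intros [[_ H] | ->]; [auto | contradiction].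
      * left. split; [exact Bb|]. intros ->. tauto.
    + destruct (basis_exchange_trunc A a b HA Aa (fun Ab => Hnand (conj Ab Bb)))
        as [D [HD [HDs Db]]].
      exists D. split; [exact HD|]. split; [|split; [|exact Db]].
      * intros y Dy. destruct (HDs y Dy) as [[Ay _] | ->]; auto.
      * intros Da. destruct (HDs a Da) as [[_ H] | <-]; auto.
Qed.

Lemma trunc_circuit_elim A B a b :
  trunc_circuit M r A -> trunc_circuit M r B -> A a -> B a ->
  (A b \/ B b) /\ ~ (A b /\ B b) ->
  exists D, trunc_circuit M r D /\ subset D (fun x => A x \/ B x) /\ ~ D a /\ D b.
Proof.
  intros HA HB Aa Ba Hb.
  destruct HB as [HB | HB]; [destruct HA as [HA | HA]|].
  - destruct (circuit_elim _ M A B a b HA HB Aa Ba Hb) as [D [HD HDs]].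
    exists D. split; [left; exact HD | exact HDs].
  - destruct (trunc_elim_with_basis B A a b (or_introl HB) HA Ba Aa) as [D [HD [HDs HDab]]];
      [tauto|].
    exists D. split; [exact HD|]. split; [|exact HDab].
    intros y Dy. destruct (HDs y Dy); auto.
  - exact (trunc_elim_with_basis A B a b HA HB Aa Ba Hb).
Qed.

Lemma basis_subset_eq A B : basis M r A -> basis M r B -> subset A B ->
  forall x, A x <-> B x.
Proof.
  intros [HA HAc] [HB HBc] HAB x. split; [apply HAB|]. intros Bx.
  apply NNPP. intros Ax.
  assert (Hi : independent M (add_elt A x)).
  { apply (independent_subset B); [exact HB|]. intros y [Ay | ->]; auto. }
  pose proof (independent_card_le _ _ Hi (has_card_add _ _ _ _ HAc Ax)). lia.
Qed.

Lemma basis_in_circuit_hamiltonian A C :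
  basis M r A -> circuit M C -> subset A C -> hamiltonian M.
Proof.
  intros [HA HAc] HC HAC.
  destruct (circuit_not_subset_independent C A HC HA) as [x [Cx Ax]].
  destruct (independent_add_circuit A x HA) as [K [HK [HKs Kx]]].
  { intros Hi. pose proof (independent_card_le _ _ Hi (has_card_add _ _ _ _ HAc Ax)). lia. }
  assert (HKC : forall y, K y <-> C y).
  { apply (circuit_antichain _ M K C HK HC).
    intros y Ky. destruct (HKs y Ky) as [Ay | ->]; auto. }
  exists r. split; [exact Hr|]. exists C. split; [exact HC|].
  apply (has_card_ext _ _ _ _ (has_card_add _ _ _ _ HAc Ax)). intros y. split.
  - intros [Ay | ->]; auto.
  - intros Cy. apply HKs, HKC, Cy.
Qed.

Hypothesis Hnh : ~ hamiltonian M.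

Lemma trunc_circuit_antichain A B :
  trunc_circuit M r A -> trunc_circuit M r B -> subset A B -> forall x, A x <-> B x.
Proof.
  intros [HA | HA] [HB | HB] HAB.
  - exact (circuit_antichain _ M A B HA HB HAB).
  - exfalso. exact (proj1 HB A HA HAB).
  - exfalso. exact (Hnh (basis_in_circuit_hamiltonian A B HA HB HAB)).
  - exact (basis_subset_eq A B HA HB HAB).
Qed.

Definition truncation : matroid T :=
  Matroid T (trunc_circuit M r) (ground_nonempty T M)
    trunc_circuit_antichain trunc_circuit_elim.

End Rank.

End Matroid.

Lemma image_id {T : Type} (A : T -> Prop) : image (fun x => x) A = A.
Proof.
  extensionality y. apply propositional_extensionality. unfold image. split.
  - intros [x [Ax <-]]. exact Ax.
  - intros Ay. exists y. auto.
Qed.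

Theorem theorem2p1 (T : Type) (M0 : matroid T) :
  finite_rank M0 -> ~ hamiltonian M0 ->
  exists (T' : Type) (M : matroid T') (f : T -> T'), nontrivial_ci M0 M f.
Proof.
  intros [r Hr] Hnh.
  exists T, (truncation T M0 r Hr Hnh), (fun x => x).
  split; [split|].
  - split; [auto | intros y; exists y; reflexivity].
  - intros A HA. rewrite image_id. left. exact HA.
  - destruct (proj1 Hr) as [B HB]. exists B. split; [right; exact HB|].
    intros A HA HAB. apply (proj1 HB A HA). intros x Ax. apply HAB. exists x. auto.
Qed.
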